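(* Consider the second-stage problem defined in the context, and suppose all its right-hand-side data are integers: the initial fill levels $d_i^0$, capacities $\overline{d}_i$, demands $f_{i,j}^{t,k}(\xi)$, prescribed in-progress journeys $w_{i,j}^{t,k}$ ($1-K\le t\le 0$), and load/unload actions $y_i^{+,t},y_i^{-,t}$. Then, even when the integrality constraint on $w$ is relaxed (so $w$ is real-valued), the resulting linear program, if feasible, has an integer-valued optimal solution.
   Context: Setting: a directed graph $\mathcal{G}_\text{SV}=(\mathcal{N}_\text{SV},\mathcal{E}_\text{SV})$ of possible shared-vehicle (SV) journeys, horizon $T$, maximum journey duration $K$, station capacities $\overline{d}_i$, initial fill levels $d_i^0$, and given load/unload actions $y_i^{+,t},y_i^{-,t}$ for $i\in\mathcal{N}_\text{SV}$, $t=1,\dots,T$ (zero at nodes where no action is defined). For a realization $\xi$, $f_{i,j}^{t,k}(\xi)\in\mathbb{N}$ is the demand for journeys from $i$ to $j$ starting at time $t$ with duration $k$, and $l_{i,j}^{t,k}(\cdot;\xi)$ is a convex piecewise affine function passing through the origin with breakpoints at the integers. The second-stage problem is $$V(y,\xi):=\min_w\ \sum_{t=1}^T\sum_{(i,j)\in\mathcal{E}_\text{SV}}\sum_{k=0}^K l_{i,j}^{t,k}(f_{i,j}^{t,k}(\xi)-w_{i,j}^{t,k};\xi)$$ subject to, for all $t=1,\dots,T$ and $i\in\mathcal{N}_\text{SV}$, $$0\le d_i^0+\sum_{\tau=1}^t\Big[\sum_{k=0}^K\Big(\sum_{(j,i)\in\mathcal{E}_\text{SV}}w_{j,i}^{\tau-k,k}-\sum_{(i,j)\in\mathcal{E}_\text{SV}}w_{i,j}^{\tau,k}\Big)+y_i^{-,\tau}-y_i^{+,\tau}\Big]\le\overline{d}_i,$$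 $0\le w_{i,j}^{t,k}\le f_{i,j}^{t,k}(\xi)$ for $t=1,\dots,T$, $k=0,\dots,K$, $(i,j)\in\mathcal{E}_\text{SV}$, with $w_{i,j}^{t,k}$ given (fixed data) for $1-K\le t\le 0$, $-t<k\le K$, and $w_{i,j}^{t,k}\in\mathbb{Z}$. *)

From HB Require Import structures.
From mathcomp Require Import all_boot all_order all_algebra.
From mathcomp Require Import reals.
Set Implicit Arguments. Unset Strict Implicit. Unset Printing Implicit Defensive.
Import Order.TTheory GRing.Theory Num.Theory.
Local Open Scope ring_scope.

Section SV.
Variable R : realType.

Definition convex_pwa_int (g : R -> R) : Prop :=
  g 0 = 0 /\
  (forall x y a : R, 0 <= a -> a <= 1 ->
      g (a * x + (1 - a) * y) <= a * g x + (1 - a) * g y) /\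
  (forall (n : int) (x : R), n%:~R <= x -> x <= (n + 1)%:~R ->
      g x = g n%:~R + (x - n%:~R) * (g (n + 1)%:~R - g n%:~R)).

Variables (N : finType) (E : rel N) (T K : nat).
Variables (d0 dbar : N -> int).
(* f t k i j : demand for journeys i -> j starting at time t, duration k *)
Variable f : nat -> nat -> N -> N -> nat.
(* wpast s k i j : prescribed in-progress journey w_{i,j}^{-s,k}, i.e. start
   time t = -s with 1-K <= t <= 0 *)
Variable wpast : nat -> nat -> N -> N -> int.
Variables (yp ym : nat -> N -> int).
Variable l : nat -> nat -> N -> N -> R -> R.

(* decision variable w t k i j = w_{i,j}^{t,k}, meaningful for 1 <= t <= T *)
Definition Wfull (w : nat -> nat -> N -> N -> R) (tau k : nat) (j i : N) : R :=
  if (k < tau)%N then w (tau - k)%N k j i else (wpast (k - tau) k j i)%:~R.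

Definition inflow (w : nat -> nat -> N -> N -> R) (tau : nat) (i : N) : R :=
  \sum_(k < K.+1) \sum_(j | E j i) Wfull w tau k j i.

Definition outflow (w : nat -> nat -> N -> N -> R) (tau : nat) (i : N) : R :=
  \sum_(k < K.+1) \sum_(j | E i j) w tau k i j.

Definition level (w : nat -> nat -> N -> N -> R) (t : nat) (i : N) : R :=
  (d0 i)%:~R + \sum_(1 <= tau < t.+1)
     (inflow w tau i - outflow w tau i + (ym tau i)%:~R - (yp tau i)%:~R).

Definition feasible (w : nat -> nat -> N -> N -> R) : Prop :=
  (forall (t : nat) (i : N), (1 <= t)%N -> (t <= T)%N ->
      0 <= level w t i /\ level w t i <= (dbar i)%:~R) /\
  (forall (t k : nat) (i j : N), (1 <= t)%N -> (t <= T)%N -> (k <= K)%N ->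
      E i j -> 0 <= w t k i j /\ w t k i j <= (f t k i j)%:R).

Definition cost (w : nat -> nat -> N -> N -> R) : R :=
  \sum_(1 <= t < T.+1) \sum_(i : N) \sum_(j | E i j) \sum_(k < K.+1)
     l t k i j ((f t k i j)%:R - w t k i j).

End SV.

From Pilot Require Import Defs.
From HB Require Import structures.
From mathcomp Require Import all_boot all_order all_algebra.
From mathcomp Require Import reals.
From mathcomp Require Import zify ring lra.
Import Order.TTheory GRing.Theory Num.Theory.
Local Open Scope ring_scope.

Set Implicit Arguments. Unset Strict Implicit. Unset Printing Implicit Defensive.

(* The relaxation is a minimum-cost flow problem on a time-expanded network whose
   vertices are the pairs (station, time): a journey (i, j, t, k) is an arc from (i, t)
   to (j, t + k) with capacity f, the fill level of i at time t an arc from (i, t) to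
   (i, t + 1) with capacity dbar.  The level recursion becomes flow conservation with
   integral right-hand sides, and the cost is separable and affine between consecutive
   integers.
   If a feasible flow has fractional arcs, every vertex touched by one of them is touched
   by at least two, so the fractional arcs outnumber the independent conservation laws
   on them and carry a nonzero circulation.  Pushing the flow along it, in the direction
   in which the cost does not increase, until one more arc becomes integral preserves
   feasibility.  Hence every feasible flow rounds to an integral one of no larger cost,
   and the cheapest of the finitely many integral feasible flows is optimal. *)

Lemma underdetermined_kernel (F : fieldType) (I J : finType) (M : I -> J -> F)
    (S : {set I}) (X : {set J}) :
  (#|S| < #|X|)%N ->
  exists d : J -> F, [/\ forall j, j \notin X -> d j = 0, exists j, d j != 0 &
    forall i, i \in S -> \sum_(j in X) M i j * d j = 0].
Proof.
move=> ltSX; pose B := \matrix_(r < #|X|, c < #|S|) M (enum_val c) (enum_val r).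
have /rowV0Pn [u /sub_kermxP uB u_neq0] : kermx B != 0.
  by rewrite -mxrank_eq0 mxrank_ker subn_eq0 -ltnNge (leq_ltn_trans (rank_leq_col B)).
have [r0 ur0] : exists r, u 0 r != 0.
  apply/existsP; apply: contraR u_neq0 => /existsPn u0.
  by apply/eqP/rowP => r; rewrite mxE; apply/eqP/negPn/u0.
pose d j := if [pick r | enum_val r == j] is Some r then u 0 r else 0.
have dE r : d (enum_val r) = u 0 r.
  rewrite /d; case: pickP => [r' /eqP/enum_val_inj -> //|/(_ r)].
  by rewrite eqxx.
exists d; split.
- move=> j jX; rewrite /d; case: pickP => [r /eqP rj|//].
  by move: jX; rewrite -rj enum_valP.
- by exists (enum_val r0); rewrite dE.
- move=> i iS; rewrite big_enum_val /=.
  transitivity ((u *m B) 0 (enum_rank_in iS i)); last by rewrite uB mxE.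
  rewrite mxE; apply: eq_bigr => r _.
  by rewrite dE mxE enum_rankK_in // mulrC.
Qed.

Section Network.
Variables (R : archiRealFieldType) (A V : finType) (head tail : A -> option V).

(* An arc end None lies outside the network, where no conservation law is imposed. *)
Definition incidence (v : V) (a : A) : R :=
  (head a == Some v)%:R - (tail a == Some v)%:R.

Definition netflow (x : A -> R) (v : V) : R := \sum_a incidence v a * x a.

Definition touches (v : V) (a : A) : bool := (head a == Some v) || (tail a == Some v).

Definition ends (a : A) : nat := (head a != None) + (tail a != None).

Definition degree (X : {set A}) (v : V) : nat :=
  \sum_(a in X) ((head a == Some v) + (tail a == Some v)).

Lemma incidence_int v a : incidence v a \is a Num.int.
Proof. by rewrite /incidence rpredB ?natr_int. Qed.

Lemma incidence_untouched v a : ~~ touches v a -> incidence v a = 0.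
Proof. by rewrite /incidence negb_or => /andP[/negbTE-> /negbTE->]; rewrite subrr. Qed.

Lemma incidence_sqr v a : head a != tail a -> touches v a -> incidence v a ^+ 2 = 1.
Proof.
rewrite /incidence => nloop /orP[]/eqP hv.
  by rewrite hv eqxx (negbTE (_ : tail a != Some v)) ?subr0 ?expr1n // -hv eq_sym.
by rewrite hv eqxx (negbTE (_ : head a != Some v)) ?sub0r ?sqrrN ?expr1n // -hv.
Qed.

Lemma netflowDZ x y s v :
  netflow (fun a => x a + s * y a) v = netflow x v + s * netflow y v.
Proof.
rewrite /netflow mulr_sumr -big_split; apply: eq_bigr => a _ /=; ring.
Qed.

Lemma netflowN x v : netflow (fun a => - x a) v = - netflow x v.
Proof. by rewrite /netflow -sumrN; apply: eq_bigr => a _; rewrite mulrN. Qed.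

Lemma netflow_supported (X : {set A}) x v : (forall a, a \notin X -> x a = 0) ->
  netflow x v = \sum_(a in X) incidence v a * x a.
Proof.
move=> x0; rewrite /netflow [RHS]big_mkcond; apply: eq_bigr => a _.
by case: ifP => // /negbT/x0->; rewrite mulr0.
Qed.

Lemma sum_eq_Some (o : option V) : (\sum_v (o == Some v) = (o != None))%N.
Proof.
case: o => [u|]; last by rewrite big1.
rewrite (bigD1 u) //= eqxx big1 // => v vu.
by case: eqP => // -[uv]; rewrite uv eqxx in vu.
Qed.

Lemma sum_netflow x :
  \sum_v netflow x v = \sum_a ((head a != None)%:R - (tail a != None)%:R) * x a.
Proof.
rewrite exchange_big; apply: eq_bigr => a _ /=.
by rewrite -mulr_suml sumrB -!natr_sum !sum_eq_Some.
Qed.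

Lemma sum_degree (X : {set A}) : (\sum_v degree X v = \sum_(a in X) ends a)%N.
Proof.
rewrite exchange_big; apply: eq_bigr => a _.
by rewrite big_split !sum_eq_Some.
Qed.

Lemma degree_ge2 (X : {set A}) v a a' : a \in X -> a' \in X -> a' != a ->
  touches v a -> touches v a' -> (2 <= degree X v)%N.
Proof.
move=> aX a'X a'a va va'; have end1 b : touches v b ->
    (0 < (head b == Some v) + (tail b == Some v))%N.
  by case/orP=> ->; rewrite ?addn_gt0 ?orbT.
rewrite /degree (bigD1 a) //= (bigD1 a') /=; last by rewrite a'X.
by move: (end1 a va) (end1 a' va'); lia.
Qed.

Lemma fractional_arc_neighbour (x : A -> R) v a :
  netflow x v \is a Num.int -> x a \notin Num.int -> head a != tail a ->
  touches v a -> exists2 a', x a' \notin Num.int & (a' != a) && touches v a'.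
Proof.
move=> xv_int xa_frac nloop va.
case: (boolP [exists a', (x a' \notin Num.int) && ((a' != a) && touches v a')]).
  by case/existsP=> a' /andP[]; exists a'.
move=> none; case/negP: xa_frac.
have rest_int : \sum_(b | b != a) incidence v b * x b \is a Num.int.
  apply: rpred_sum => b ba; case: (boolP (touches v b)) => vb.
    rewrite rpredM ?incidence_int //; apply: contraNT none => xb.
    by apply/existsP; exists b; rewrite xb ba vb.
  by rewrite incidence_untouched // mul0r rpred0.
have -> : x a = incidence v a * (netflow x v - \sum_(b | b != a) incidence v b * x b).
  by rewrite /netflow (bigD1 a) //= addrK mulrA -expr2 incidence_sqr ?mul1r.
by rewrite rpredM ?incidence_int ?rpredB.
Qed.

Definition touched (X : {set A}) : {set V} := [set v | [exists a in X, touches v a]].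

Lemma netflow_untouched (X : {set A}) d v : (forall a, a \notin X -> d a = 0) ->
  v \notin touched X -> netflow d v = 0.
Proof.
move=> dX vX; rewrite (netflow_supported _ dX) big1 // => a aX.
rewrite incidence_untouched ?mul0r //; apply: contraNN vX => va.
by rewrite inE; apply/exists_inP; exists a.
Qed.

Lemma card_touched (X : {set A}) :
  (forall v a, a \in X -> touches v a -> exists2 a', a' \in X & (a' != a) && touches v a') ->
  (2 * #|touched X| <= \sum_(a in X) ends a)%N.
Proof.
move=> nbr; rewrite -sum_degree (bigID (mem (touched X))) /= mulnC -sum_nat_const.
apply: leq_trans (leq_addr _ _); apply: leq_sum => v.
rewrite inE => /exists_inP[a aX va]; have [a' a'X /andP[a'a va']] := nbr v a aX va.
exact: degree_ge2 aX a'X a'a va va'.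
Qed.

Lemma sum_netflow_closed (X : {set A}) d : (forall a, a \notin X -> d a = 0) ->
  (forall a, a \in X -> ends a == 2) -> \sum_v netflow d v = 0.
Proof.
move=> dX X2; rewrite sum_netflow big1 // => a _.
case: (boolP (a \in X)) => [/X2|/dX->]; last by rewrite mulr0.
by rewrite /ends; case: (head a != None); case: (tail a != None); rewrite // subrr mul0r.
Qed.

(* Every vertex touched by X has degree at least 2 in X, so 2 #|touched X| is at most the
   number of ends of arcs of X in V.  If one of these ends is missing this is < 2 #|X|;
   otherwise the conservation laws at the touched vertices sum to zero and one of them
   is redundant. *)
Lemma conservation_laws_reduce (X : {set A}) a0 : a0 \in X ->
  (forall v a, a \in X -> touches v a -> exists2 a', a' \in X & (a' != a) && touches v a') ->
  exists2 S : {set V}, (#|S| < #|X|)%N & forall d : A -> R,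
    (forall a, a \notin X -> d a = 0) -> (forall v, v \in S -> netflow d v = 0) ->
    forall v, netflow d v = 0.
Proof.
move=> a0X nbr; have card_X := card_touched nbr.
have ends_le2 a : (ends a <= 2)%N by rewrite /ends; case: (_ != None); case: (_ != None).
case: (boolP [forall a in X, ends a == 2]) => [/forall_inP X2|]; last first.
  rewrite negb_forall_in => /exists_inP[a1 a1X a1_ne2].
  exists (touched X) => [|d dX dS v]; last first.
    by case: (boolP (v \in touched X)) => [/dS|/(netflow_untouched dX)].
  have : (\sum_(a in X) ends a < \sum_(a in X) 2)%N.
    rewrite (bigD1 a1) // [X in (_ < X)%N](bigD1 a1) //= -addSn leq_add ?leq_sum //.
    by rewrite ltn_neqAle a1_ne2 ends_le2.
  by rewrite sum_nat_const; move: card_X; lia.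
have [v0 h0] : exists v0, head a0 = Some v0.
  move: (X2 a0 a0X); rewrite /ends; case: (head a0) => [v0 _|]; first by exists v0.
  by case: (tail a0 != None).
have v0X : v0 \in touched X.
  by rewrite inE; apply/exists_inP; exists a0; rewrite // /touches h0 eqxx.
exists (touched X :\ v0).
  have : (\sum_(a in X) ends a = #|X| * 2)%N.
    by rewrite -sum_nat_const; apply: eq_bigr => a /X2/eqP.
  by move: card_X (cardsD1 v0 (touched X)); rewrite v0X; lia.
move=> d dX dS; have others v : v != v0 -> netflow d v = 0.
  move=> vv0; case: (boolP (v \in touched X)) => vX; last exact: netflow_untouched dX vX.
  by apply: dS; rewrite in_setD1 vv0.
move=> v; case: (eqVneq v v0) => [->|/others //].
by move: (sum_netflow_closed dX X2); rewrite (bigD1 v0) //= big1 ?addr0 // => u /others.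
Qed.

Lemma fractional_circulation (x : A -> R) a0 :
  (forall v, netflow x v \is a Num.int) -> x a0 \notin Num.int ->
  exists d : A -> R, [/\ forall a, x a \is a Num.int -> d a = 0,
    exists a, d a != 0 & forall v, netflow d v = 0].
Proof.
move=> x_int xa0; pose X := [set a | x a \notin Num.int].
have dX d : (forall a, a \notin X -> d a = 0) -> forall a, x a \is a Num.int -> d a = 0.
  by move=> d0 a xa; apply: d0; rewrite inE negbK.
case: (boolP [exists a in X, head a == tail a]) => [/exists_inP[a aX /eqP loop]|].
  exists (fun b => (b == a)%:R); split.
  - by move=> b xb; case: eqP => // ba; move: aX; rewrite inE -ba xb.
  - by exists a; rewrite eqxx oner_eq0.
  - move=> v; rewrite /netflow (bigD1 a) //= eqxx mulr1 big1 ?addr0.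
      by rewrite /incidence loop subrr.
    by move=> b /negbTE->; rewrite mulr0.
rewrite negb_exists_in => /forall_inP nloop.
have nbr v a : a \in X -> touches v a -> exists2 a', a' \in X & (a' != a) && touches v a'.
  move=> aX va; have [|a' xa' a'a] := fractional_arc_neighbour (x_int v) _ (nloop a aX) va.
    by rewrite inE in aX.
  by exists a'; rewrite ?inE.
have a0X : a0 \in X by rewrite inE.
have [S ltSX Slaws] := conservation_laws_reduce a0X nbr.
have [d [d0 dnz dS]] := @underdetermined_kernel _ _ _ incidence _ _ ltSX.
exists d; split => //; first exact: dX.
by apply: Slaws => // v vS; rewrite (netflow_supported _ d0) dS.
Qed.

End Network.

Section Cells.
Variable R : archiRealFieldType.
Implicit Types (g : R -> R) (y : R).

Definition in_cell (n : int) y : bool := n%:~R <= y <= (n + 1)%:~R.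

Definition cellwise_affine g : Prop := forall (n : int) y, in_cell n y ->
  g y = g n%:~R + (y - n%:~R) * (g (n + 1)%:~R - g n%:~R).

Lemma in_floor_cell y : in_cell (Num.floor y) y.
Proof. by rewrite /in_cell floor_le ltW ?floorD1_gt. Qed.

Lemma floor_lt_nonint y : y \notin Num.int -> (Num.floor y)%:~R < y.
Proof.
move=> y_frac; rewrite lt_neqAle floor_le andbT.
by apply: contraNN y_frac => /eqP <-; exact: intr_int.
Qed.

Lemma cellwise_affine0 : cellwise_affine (fun=> 0).
Proof. by move=> n y _; rewrite subrr mulr0 addr0. Qed.

Lemma cellwise_affine_reflect g (m : int) :
  cellwise_affine g -> cellwise_affine (fun y => g (m%:~R - y)).
Proof.
move=> g_aff n y /andP[ny yn1].
have cell : in_cell (m - n - 1) (m%:~R - y).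
  by rewrite /in_cell !intrD !intrN; apply/andP; split; lra.
have lo : ((m - n - 1)%:~R : R) = m%:~R - (n + 1)%:~R by rewrite !intrD !intrN; ring.
have hi : ((m - n - 1 + 1)%:~R : R) = m%:~R - n%:~R by rewrite !intrD !intrN; ring.
rewrite (g_aff _ _ cell) lo hi.
set a := g (_ - (n + 1)%:~R); set b := g (_ - n%:~R).
by rewrite intrD; ring.
Qed.

Lemma step_to_cell_boundary (A : finType) (x e : A -> R) :
  (forall a, x a \is a Num.int -> e a = 0) -> (exists a, e a != 0) ->
  exists2 s : R, 0 < s & (forall a, in_cell (Num.floor (x a)) (x a + s * e a)) /\
    exists a, x a \notin Num.int /\ x a + s * e a \is a Num.int.
Proof.
move=> e_int [a0 ea0].
have x_frac a : e a != 0 -> x a \notin Num.int.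
  by apply: contraNN => /e_int->.
(* The end of the cell of x a towards which e a points. *)
pose wall a : int := Num.floor (x a) + (0 < e a).
pose room a := ((wall a)%:~R - x a) / e a.
have room_gt0 a : e a != 0 -> 0 < room a.
  move=> ea; have lo := floor_lt_nonint (x_frac a ea); have hi := floorD1_gt (x a).
  rewrite /room /wall; case: (ltrP 0 (e a)) => [ea_gt0|ea_le0].
    by rewrite divr_gt0 // subr_gt0.
  have ea_lt0 : e a < 0 by rewrite lt_neqAle ea.
  by rewrite addr0 nmulr_rgt0 ?invr_lt0 // subr_lt0.
have at_wall a : e a != 0 -> x a + room a * e a = (wall a)%:~R.
  by move=> ea; rewrite /room divfK // addrC subrK.
have [a1 ea1 room_min] := @arg_minP _ _ _ a0 (fun a => e a != 0) room ea0.
exists (room a1); first exact: room_gt0.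
split; last by exists a1; rewrite x_frac // at_wall // intr_int.
move=> a; case: (eqVneq (e a) 0) => [->|ea]; first by rewrite mulr0 addr0 in_floor_cell.
have s_le : room a1 <= room a := room_min a ea.
have s_gt0 : 0 < room a1 := room_gt0 _ ea1.
have := at_wall a ea; have /andP[lo hi] := in_floor_cell (x a).
rewrite /in_cell /wall; case: (ltrP 0 (e a)) => [ea_gt0|ea_le0] wall_eq.
  have : room a1 * e a <= room a * e a by rewrite ler_pM2r.
  have : 0 <= room a1 * e a by rewrite mulr_ge0 // ltW.
  have {}wall_eq : x a + room a * e a = (Num.floor (x a) + 1)%:~R by exact: wall_eq.
  lra.
have ea_lt0 : e a < 0 by rewrite lt_neqAle ea.
have : room a * e a <= room a1 * e a by rewrite ler_nM2r.
have : room a1 * e a <= 0 by rewrite mulr_ge0_le0 // ltW.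
have {}wall_eq : x a + room a * e a = (Num.floor (x a))%:~R by rewrite wall_eq addr0.
lra.
Qed.

End Cells.

Section Rounding.
Variables (R : archiRealFieldType) (A V : finType) (head tail : A -> option V).
Variables (cap : A -> int) (balance : V -> int) (c : A -> R -> R).
Hypothesis c_affine : forall a, cellwise_affine (c a).
Implicit Types x y e : A -> R.

Local Notation netflow := (netflow head tail).

Definition flow_feasible x : bool :=
  [forall a, 0 <= x a <= (cap a)%:~R] && [forall v, netflow x v == (balance v)%:~R].

Definition flow_cost x : R := \sum_a c a (x a).

Definition cell_slope x (a : A) : R :=
  c a (Num.floor (x a) + 1)%:~R - c a (Num.floor (x a))%:~R.

Definition fractional x : {set A} := [set a | x a \notin Num.int].

Lemma eq_flow_feasible x y : x =1 y -> flow_feasible x -> flow_feasible y.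
Proof.
move=> xy /andP[/forallP x_box /forallP x_bal]; apply/andP; split; apply/forallP.
  by move=> a; rewrite -xy.
move=> v; rewrite -(eqP (x_bal v)); apply/eqP/eq_bigr => a _; by rewrite xy.
Qed.

Lemma eq_flow_cost x y : x =1 y -> flow_cost x = flow_cost y.
Proof. by move=> xy; apply: eq_bigr => a _; rewrite xy. Qed.

Lemma flow_feasible_step x e s : flow_feasible x ->
  (forall a, x a \is a Num.int -> e a = 0) -> (forall v, netflow e v = 0) ->
  (forall a, in_cell (Num.floor (x a)) (x a + s * e a)) ->
  flow_feasible (fun a => x a + s * e a).
Proof.
case/andP=> /forallP x_box /forallP x_bal e_int e_circ e_cell; apply/andP; split.
  apply/forallP => a; case: (boolP (x a \is a Num.int)) => [/e_int->|x_frac].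
    by rewrite mulr0 addr0.
  have /andP[lo hi] := e_cell a; have /andP[x_ge0 x_le] := x_box a.
  apply/andP; split; first by rewrite (le_trans _ lo) // ler0z floor_ge0.
  rewrite (le_trans hi) // ler_int lezD1 floor_lt_int lt_neqAle x_le andbT.
  by apply: contraNN x_frac => /eqP->; exact: intr_int.
by apply/forallP => v; rewrite netflowDZ e_circ mulr0 addr0.
Qed.

Lemma flow_cost_step x e s : (forall a, in_cell (Num.floor (x a)) (x a + s * e a)) ->
  flow_cost (fun a => x a + s * e a) = flow_cost x + s * \sum_a e a * cell_slope x a.
Proof.
move=> e_cell; rewrite /flow_cost mulr_sumr -big_split; apply: eq_bigr => a _ /=.
rewrite (c_affine _ (e_cell a)) [c a (x a)](c_affine _ (in_floor_cell (x a))) /cell_slope.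
ring.
Qed.

Lemma card_fractional_step x y a0 : (forall a, x a \is a Num.int -> y a = x a) ->
  x a0 \notin Num.int -> y a0 \is a Num.int -> (#|fractional y| < #|fractional x|)%N.
Proof.
move=> xy xa0 ya0; rewrite (cardsD1 a0 (fractional x)) inE xa0 add1n ltnS.
apply: subset_leq_card; apply/subsetP => a; rewrite !inE => ya.
apply/andP; split; first by apply: contraNneq ya => ->.
by apply: contraNN ya => xa; rewrite xy.
Qed.

Lemma flow_rounding x : flow_feasible x ->
  exists2 z : A -> int, flow_feasible (fun a => (z a)%:~R) &
    flow_cost (fun a => (z a)%:~R) <= flow_cost x.
Proof.
have [n] := ubnP #|fractional x|; elim: n x => // n IH x lt_n feas_x.
have [x_int|[a0 xa0]] : (forall a, x a \is a Num.int) \/ exists a0, x a0 \notin Num.int.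
- by case: (boolP [forall a, x a \is a Num.int]) => [/forallP|/forallPn]; [left|right].
- have xE : (fun a => (Num.floor (x a))%:~R) =1 x by move=> a; rewrite floorK ?x_int.
  exists (fun a => Num.floor (x a)); first exact: eq_flow_feasible (fsym xE) feas_x.
  by rewrite (eq_flow_cost xE).
have net_int v : netflow x v \is a Num.int.
  by case/andP: feas_x => _ /forallP/(_ v)/eqP->; exact: intr_int.
have [d [d_int d_nz d_circ]] := fractional_circulation net_int xa0.
wlog slope_le0 : d d_int d_nz d_circ / \sum_a d a * cell_slope x a <= 0.
  move=> wlog; case: (lerP (\sum_a d a * cell_slope x a) 0); first exact: wlog.
  move=> slope_gt0; apply: (wlog (fun a => - d a)).
  - by move=> a /d_int->; rewrite oppr0.
  - by case: d_nz => a da; exists a; rewrite oppr_eq0.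
  - by move=> v; rewrite netflowN d_circ oppr0.
  - by rewrite (eq_bigr _ (fun a _ => mulNr _ _)) sumrN oppr_le0 ltW.
have [s s_gt0 [s_cell [a1 [xa1 ya1]]]] := step_to_cell_boundary d_int d_nz.
have [|z feas_z cost_z] := IH _ _ (flow_feasible_step feas_x d_int d_circ s_cell).
  apply: leq_trans (card_fractional_step _ xa1 ya1) _ => [a /d_int->|].
    by rewrite mulr0 addr0.
  by rewrite -ltnS.
exists z => //; apply: le_trans cost_z _; rewrite flow_cost_step //.
by have := mulr_ge0_le0 (ltW s_gt0) slope_le0; lra.
Qed.

Lemma integral_flow_optimum x0 : flow_feasible x0 ->
  exists2 z : A -> int, flow_feasible (fun a => (z a)%:~R) &
    forall x, flow_feasible x -> flow_cost (fun a => (z a)%:~R) <= flow_cost x.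
Proof.
move=> feas_x0; pose M := (\max_a `|cap a|)%N.
(* Integral feasible flows range over the finite type {ffun A -> 'I_M.+1}. *)
pose of_bounded (g : {ffun A -> 'I_M.+1}) a : R := (g a)%:R.
have bounded z : flow_feasible (fun a => (z a)%:~R) -> exists2 g,
    flow_feasible (of_bounded g) & flow_cost (of_bounded g) = flow_cost (fun a => (z a)%:~R).
  move=> feas_z; have /andP[/forallP z_box _] := feas_z.
  have gE : of_bounded [ffun a => inord `|z a|%N] =1 (fun a => (z a)%:~R).
    move=> a; have /andP[] := z_box a; rewrite ler0z ler_int => z_ge0 z_le.
    rewrite /of_bounded ffunE inordK ?natr_absz ?ger0_norm // ltnS.
    by apply: leq_trans (leq_bigmax a); lia.
  exists [ffun a => inord `|z a|%N]; first exact: eq_flow_feasible (fsym gE) feas_z.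
  exact: eq_flow_cost gE.
have [z0 /bounded[g0 feas_g0 _] _] := flow_rounding feas_x0.
have [gm feas_gm gm_min] := @arg_minP _ _ _ g0 (fun g => flow_feasible (of_bounded g))
  (fun g => flow_cost (of_bounded g)) feas_g0.
exists (fun a => (gm a : nat)%:Z) => // x /flow_rounding[z /bounded[g feas_g <-] cost_z].
exact: le_trans (gm_min g feas_g) cost_z.
Qed.
End Rounding.

Section SharedVehicleFlow.
Variables (R : realType) (N : finType) (E : rel N) (T K : nat) (d0 dbar : N -> int).
Variables (f : nat -> nat -> N -> N -> nat) (wpast : nat -> nat -> N -> N -> int).
Variables (yp ym : nat -> N -> int) (l : nat -> nat -> N -> N -> R -> R).

Local Notation journey := ('I_T * 'I_K.+1 * N * N)%type.
Local Notation slot := ('I_T * N)%type.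
Local Notation arc := (journey + slot)%type.
Local Notation plan := (nat -> nat -> N -> N -> R).
Implicit Types (x y : arc -> R) (w : plan).

(* The journey (s, k, i, j) carries w_{i,j}^{s+1,k}; the slot (t, i) is station i at
   time t + 1, and the arc inr (t, i) carries its fill level to the slot (t + 1, i).
   Arcs ending after the horizon have head None; journeys along non-edges of E are
   dead arcs with no ends and capacity 0. *)

Definition slot_after (s : 'I_T) (k : nat) (i : N) : option slot :=
  omap (fun t : 'I_T => (t, i)) (insub (s + k)%N).

Definition arc_tail (a : arc) : option slot :=
  match a with
  | inl (s, k, i, j) => if E i j then Some (s, i) else None
  | inr v => Some v
  end.

Definition arc_head (a : arc) : option slot :=
  match a with
  | inl (s, k, i, j) => if E i j then slot_after s k j else None
  | inr (t, i) => slot_after t 1 i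
  end.

Local Notation net := (netflow arc_head arc_tail).

Lemma slot_after_eq s k i (t : 'I_T) i' :
  (slot_after s k i == Some (t, i')) = ((s + k)%N == t) && (i == i').
Proof.
rewrite /slot_after; case: insubP => [u _ uE|sk_ge] /=.
  by rewrite (inj_eq Some_inj) xpair_eqE -val_eqE uE.
by apply/esym/andP => -[/eqP skt _]; rewrite skt ltn_ord in sk_ge.
Qed.

Lemma sum_journeys (F : journey -> R) :
  \sum_p F p = \sum_(s < T) \sum_(k < K.+1) \sum_i \sum_j F (s, k, i, j).
Proof. by rewrite !pair_bigA; apply: eq_bigr => -[[[s k] i] j]. Qed.

Lemma sum_shift (g : nat -> R) (t : 'I_T) k :
  \sum_(s < T | (s + k)%N == t) g s = if (k <= t)%N then g (t - k)%N else 0.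
Proof.
case: leqP => [kt|tk]; last by rewrite big1 // => s /eqP; lia.
have tk_lt : (t - k < T)%N by rewrite (leq_ltn_trans (leq_subr _ _)).
by rewrite (big_pred1 (Ordinal tk_lt)) // => s; rewrite /= -val_eqE /=; apply/eqP/eqP; lia.
Qed.

Definition arrivals (x : arc -> R) (t : 'I_T) (i : N) : R :=
  \sum_(k < K.+1) \sum_(j | E j i) \sum_(s < T | (s + k)%N == t) x (inl (s, k, j, i)).

Definition departures (x : arc -> R) (t : 'I_T) (i : N) : R :=
  \sum_(k < K.+1) \sum_(j | E i j) x (inl (t, k, i, j)).

Definition carried_in (x : arc -> R) (t : 'I_T) (i : N) : R :=
  \sum_(s < T | (s + 1)%N == t) x (inr (s, i)).

Lemma sum_journey_heads x t i :
  \sum_p (arc_head (inl p) == Some (t, i))%:R * x (inl p) = arrivals x t i.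
Proof.
rewrite sum_journeys exchange_big; apply: eq_bigr => k _.
rewrite exchange_big /= [RHS]big_mkcond; apply: eq_bigr => j _.
have head_at s :
    \sum_i' (arc_head (inl (s, k, j, i')) == Some (t, i))%:R * x (inl (s, k, j, i')) =
    if E j i && ((s + k)%N == t) then x (inl (s, k, j, i)) else 0.
  rewrite (bigD1 i) //= big1 => [|i' i'i]; last first.
    by case: (E j i'); rewrite ?slot_after_eq ?(negbTE i'i) ?andbF /= ?mul0r.
  by case: (E j i); rewrite ?slot_after_eq ?eqxx ?andbT /= ?mulr_natl ?mulrb ?mulr0n ?addr0.
rewrite (eq_bigr _ (fun s _ => head_at s)); case: (E j i); last by rewrite big1.
by rewrite -big_mkcond.
Qed.

Lemma sum_journey_tails x t i :
  \sum_p (arc_tail (inl p) == Some (t, i))%:R * x (inl p) = departures x t i.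
Proof.
rewrite sum_journeys (bigD1 t) //= [X in _ + X]big1 ?addr0 => [|s st]; last first.
  apply: big1 => k _; apply: big1 => j _; apply: big1 => j' _ /=.
  by case: (E j j'); rewrite /= ?(inj_eq Some_inj) ?xpair_eqE ?(negbTE st) /= ?mul0r.
apply: eq_bigr => k _; rewrite (bigD1 i) //= [X in _ + X]big1 ?addr0 => [|j ji]; last first.
  apply: big1 => j' _ /=.
  by case: (E j j'); rewrite /= ?(inj_eq Some_inj) ?xpair_eqE ?(negbTE ji) ?andbF /= ?mul0r.
rewrite [RHS]big_mkcond; apply: eq_bigr => j _ /=.
by case: (E i j); rewrite /= ?eqxx ?mul1r ?mul0r.
Qed.

Lemma sum_slots (F : slot -> R) : \sum_v F v = \sum_(t < T) \sum_i F (t, i).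
Proof. by rewrite pair_bigA; apply: eq_bigr => -[]. Qed.

Lemma sum_slot_tails x v : \sum_q (arc_tail (inr q) == Some v)%:R * x (inr q) = x (inr v).
Proof.
rewrite (bigD1 v) //= eqxx mul1r big1 ?addr0 // => q qv.
by rewrite (inj_eq Some_inj) (negbTE qv) mul0r.
Qed.

Lemma sum_slot_heads x t i :
  \sum_q (arc_head (inr q) == Some (t, i))%:R * x (inr q) = carried_in x t i.
Proof.
rewrite sum_slots [RHS]big_mkcond; apply: eq_bigr => s _.
rewrite (bigD1 i) //= big1 ?addr0 => [|i' i'i]; last first.
  by rewrite slot_after_eq (negbTE i'i) andbF mul0r.
by rewrite slot_after_eq eqxx andbT mulr_natl mulrb.
Qed.

Lemma netflow_slot x t i : net x (t, i) =
  arrivals x t i - departures x t i + carried_in x t i - x (inr (t, i)).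
Proof.
rewrite /netflow big_sumType /= /incidence !(eq_bigr _ (fun a _ => mulrBl _ _ _)) !sumrB.
rewrite sum_journey_heads sum_journey_tails sum_slot_heads sum_slot_tails; ring.
Qed.

Lemma flow_determined_by_journeys x y : (forall p, x (inl p) = y (inl p)) ->
  (forall v, net x v = net y v) -> x =1 y.
Proof.
move=> xy_J xy_net [p|[t i]]; first exact: xy_J.
have [n] := ubnP t; elim: n t i => // n IH t i t_lt.
have eA : arrivals x t i = arrivals y t i.
  by apply: eq_bigr => k _; apply: eq_bigr => j _; apply: eq_bigr => s _; exact: xy_J.
have eD : departures x t i = departures y t i.
  by apply: eq_bigr => k _; apply: eq_bigr => j _; exact: xy_J.
have eS : carried_in x t i = carried_in y t i.
  by apply: eq_bigr => s /eqP st; apply: IH; lia.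
by move: (xy_net (t, i)); rewrite !netflow_slot eA eD eS => /addrI/oppr_inj.
Qed.

Definition arc_cap (a : arc) : int :=
  match a with
  | inl (s, k, i, j) => if E i j then (f s.+1 k i j)%:Z else 0
  | inr (_, i) => dbar i
  end.

Definition arc_cost (a : arc) : R -> R :=
  match a with
  | inl (s, k, i, j) => fun r => if E i j then l s.+1 k i j ((f s.+1 k i j)%:R - r) else 0
  | inr _ => fun=> 0
  end.

Definition past_inflow (t : nat) (i : N) : int :=
  \sum_(k < K.+1) \sum_(j | E j i) (if (k < t)%N then 0 else wpast (k - t)%N k j i).

Definition slot_balance (v : slot) : int :=
  (if v.1 == 0 :> nat then - d0 v.2 else 0) - past_inflow v.1.+1 v.2
  - ym v.1.+1 v.2 + yp v.1.+1 v.2.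

Local Notation level := (level E K d0 wpast yp ym).

Definition flow_of w (a : arc) : R :=
  match a with
  | inl (s, k, i, j) => if E i j then w s.+1 k i j else 0
  | inr (t, i) => level w t.+1 i
  end.

Lemma level0 w i : level w 0 i = (d0 i)%:~R.
Proof. by rewrite /Defs.level big_geq // addr0. Qed.

Lemma levelS w t i : level w t.+1 i = level w t i +
  (inflow E K wpast w t.+1 i - outflow E K w t.+1 i + (ym t.+1 i)%:~R - (yp t.+1 i)%:~R).
Proof. by rewrite /Defs.level big_nat_recr //= addrA. Qed.

Lemma inflow_split w t i : inflow E K wpast w t i =
  \sum_(k < K.+1) \sum_(j | E j i) (if (k < t)%N then w (t - k)%N k j i else 0)
  + (past_inflow t i)%:~R.
Proof.
rewrite /inflow /past_inflow rmorph_sum -big_split; apply: eq_bigr => k _ /=.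
rewrite rmorph_sum -big_split; apply: eq_bigr => j _ /=.
by rewrite /Wfull; case: ifP; rewrite ?addr0 ?add0r.
Qed.

Lemma netflow_flow_of w v : net (flow_of w) v = (slot_balance v)%:~R.
Proof.
case: v => t i; rewrite netflow_slot.
have arrE : arrivals (flow_of w) t i = inflow E K wpast w t.+1 i - (past_inflow t.+1 i)%:~R.
  rewrite inflow_split addrK; apply: eq_bigr => k _; apply: eq_bigr => j ji.
  rewrite (eq_bigr (fun s : 'I_T => w s.+1 k j i)) => [|s _]; last by rewrite /= ji.
  by rewrite (sum_shift (fun s => w s.+1 k j i)) ltnS; case: leqP => // kt; rewrite subSn.
have depE : departures (flow_of w) t i = outflow E K w t.+1 i.
  by apply: eq_bigr => k _; apply: eq_bigr => j ij; rewrite /= ij.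
have prevE : carried_in (flow_of w) t i =
    level w t i + ((if t == 0 :> nat then - d0 i else 0)%:~R).
  rewrite /carried_in (eq_bigr (fun s : 'I_T => level w s.+1 i)) //.
  rewrite (sum_shift (fun s => level w s.+1 i)).
  have [t0|t_gt0] := posnP t; first by rewrite t0 /= level0 intrN subrr.
  by rewrite subn1 prednK // mulr0z addr0.
rewrite arrE depE prevE /= levelS /slot_balance /= !(intrD, intrN); ring.
Qed.

Local Notation feasible_flow :=
  (flow_feasible (R := R) arc_head arc_tail arc_cap slot_balance).

Lemma feasibleE w : feasible E T K d0 dbar f wpast yp ym w <-> feasible_flow (flow_of w).
Proof.
have balanced : [forall v, net (flow_of w) v == (slot_balance v)%:~R].
  by apply/forallP => v; rewrite netflow_flow_of.
rewrite /flow_feasible balanced andbT; split.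
  case=> level_box w_box; apply/forallP => -[[[[s k] i] j]|[t i]] /=.
    case: ifP => ij; last by rewrite lexx.
    by apply/andP; exact: w_box (ltn0Sn _) (ltn_ord s) (ltn_ord k) ij.
  by apply/andP; apply: level_box.
move/forallP=> box; split=> [t i t_ge1 t_le|t k i j t_ge1 t_le k_le ij].
  have t_lt : (t.-1 < T)%N by lia.
  by have := box (inr (Ordinal t_lt, i)); rewrite /= prednK // => /andP.
have t_lt : (t.-1 < T)%N by lia.
have k_lt : (k < K.+1)%N by lia.
by have := box (inl (Ordinal t_lt, Ordinal k_lt, i, j)); rewrite /= ij prednK // => /andP.
Qed.

Lemma costE w : cost E T K f l w = flow_cost arc_cost (flow_of w).
Proof.
rewrite /flow_cost big_sumType /= [X in _ + X]big1 // addr0 sum_journeys.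
rewrite /cost big_add1 /= big_mkord; apply: eq_bigr => s _.
rewrite [RHS]exchange_big; apply: eq_bigr => i _.
rewrite [RHS]exchange_big big_mkcond; apply: eq_bigr => j _ /=.
by case: (E i j) => //; rewrite big1.
Qed.

Lemma convex_pwa_int_cellwise_affine (g : R -> R) :
  convex_pwa_int g -> cellwise_affine g.
Proof. by case=> _ [_ g_aff] n y /andP[]; exact: g_aff. Qed.

Lemma arc_cost_affine : (forall t k i j, convex_pwa_int (l t k i j)) ->
  forall a, cellwise_affine (arc_cost a).
Proof.
move=> l_pwa [[[[s k] i] j]|v] /=; last exact: cellwise_affine0.
case: (E i j); last exact: cellwise_affine0.
apply: cellwise_affine_reflect (f s.+1 k i j)%:Z _.
exact: convex_pwa_int_cellwise_affine.
Qed.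

Definition plan_of (z : arc -> int) (t k : nat) (i j : N) : int :=
  if t is s.+1 then
    if (insub s : option 'I_T) is Some s' then
      if (insub k : option 'I_K.+1) is Some k' then z (inl (s', k', i, j)) else 0
    else 0
  else 0.

Lemma flow_of_plan_of z : feasible_flow (fun a => (z a)%:~R) ->
  flow_of (fun t k i j => (plan_of z t k i j)%:~R) =1 (fun a => (z a)%:~R).
Proof.
case/andP=> /forallP z_box /forallP z_bal.
apply: flow_determined_by_journeys => [[[[s k] i] j]|v] /=.
  rewrite !valK; case: ifP => // ij; apply: le_anti.
  by have := z_box (inl (s, k, i, j)); rewrite /= ij andbC.
by rewrite netflow_flow_of (eqP (z_bal v)).
Qed.

End SharedVehicleFlow.

Theorem proposition1 (R : realType) (N : finType) (E : rel N) (T K : nat)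
    (d0 dbar : N -> int) (f : nat -> nat -> N -> N -> nat)
    (wpast : nat -> nat -> N -> N -> int) (yp ym : nat -> N -> int)
    (l : nat -> nat -> N -> N -> R -> R)
    (hl : forall (t k : nat) (i j : N), convex_pwa_int (l t k i j)) :
  (exists w : nat -> nat -> N -> N -> R,
      feasible E T K d0 dbar f wpast yp ym w) ->
  exists wz : nat -> nat -> N -> N -> int,
    let w := fun t k i j => (wz t k i j)%:~R : R in
    feasible E T K d0 dbar f wpast yp ym w /\
    forall w' : nat -> nat -> N -> N -> R,
      feasible E T K d0 dbar f wpast yp ym w' ->
      cost E T K f l w <= cost E T K f l w'.
Proof.
case=> w0 /feasibleE feas_w0.
have [z feas_z z_opt] := integral_flow_optimum (arc_cost_affine E f hl) feas_w0.
have zE := flow_of_plan_of feas_z.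
exists (plan_of z) => /=; split.
  by apply/feasibleE; exact: eq_flow_feasible (fsym zE) feas_z.
move=> w' /feasibleE /z_opt.
by rewrite -(eq_flow_cost _ zE) -!costE.
Qed.
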